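(* (i) For any $k,l\ge1$, $v\in\mathfrak{H}y$, $w\in\mathfrak{H}^1$: $\gamma_\hbar^t(z_k)v\ast_+z_lw=\gamma_\hbar^t(z_k)(v\ast_+z_lw)+z_l\bigl(\gamma_\hbar^t(z_k)v\ast_+w\bigr)+(1-t)(z_k\circ_+z_l)(v\ast_+w)$. (ii) For any $k,l\ge1$, $v,w\in\mathfrak{H}^1$: $S_\hbar^t(z_kv)\ast_+z_lw=\gamma_\hbar^t(z_k)\bigl(S_\hbar^t(v)\ast_+z_lw\bigr)+z_l\bigl(S_\hbar^t(z_kv)\ast_+w\bigr)+(1-t)(z_k\circ_+z_l)\bigl(S_\hbar^t(v)\ast_+w\bigr)$. (iii) For any $k\ge0$, $l\ge1$, $v=z_pV$ with $p\ge1$, $V\in\mathfrak{H}^1$, and $w\in\mathfrak{H}y$: $x^kv\ast_+\gamma_\hbar^t(z_l)w=z_{k+p}\bigl(V\ast_+\gamma_\hbar^t(z_l)w\bigr)+\gamma_\hbar^t(z_l)(x^kv\ast_+w)+(1-t)(z_{k+p}\circ_+z_l)(V\ast_+w)$.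
   Context: Let $\hbar,t$ be formal variables and $\mathfrak{H}=\mathbb{Q}[\hbar,t]\langle x,y\rangle$ the noncommutative polynomial algebra over $\mathbb{Q}[\hbar,t]$; put $\mathfrak{H}^1=\mathbb{Q}[\hbar,t]+\mathfrak{H}y$ and $z_j=x^{j-1}y$ ($j\ge1$). Let $\mathfrak z$ be the $\mathbb{Q}[\hbar,t]$-span of $\{z_j\}$, with bilinear product $z_i\circ_+ z_j=z_{i+j}+\hbar z_{i+j-1}$, and for $a\in\mathfrak z$, $b\in\mathfrak{H}^1$ the product $ab$ denotes concatenation. Let $\gamma_\hbar^t$ be the algebra automorphism of $\mathfrak{H}$ with $\gamma_\hbar^t(x)=x$, $\gamma_\hbar^t(y)=tx+y+\hbar t$ (so $\gamma_\hbar^t(z_k)=x^{k-1}(tx+y+\hbar t)$). Let $S_\hbar^t:\mathfrak{H}^1\to\mathfrak{H}^1$ be the $\mathbb{Q}[\hbar,t]$-linear map with $S_\hbar^t(1)=1$ and $S_\hbar^t(z_kw)=z_kS_\hbar^t(w)+t\,z_k\circ_+S_\hbar^t(w)$ for words $w\in\mathfrak{H}^1$, where $\circ_+$ acts on $\mathfrak{H}^1$ via $z_i\circ_+1=0$, $z_i\circ_+(z_jw)=(z_i\circ_+z_j)w$. The product $\ast_+$ on $\mathfrak{H}^1$ is the $\mathbb{Q}[\hbar,t]$-bilinear product with $1\ast_+w=w\ast_+1=w$ and $z_iu\ast_+z_jv=z_i(u\ast_+z_jv)+z_j(z_iu\ast_+v)+(z_i\circ_+z_j)(u\ast_+v)$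 for $i,j\ge1$ and words $u,v,w$. *)

(* Noncommutative polynomials over Q[hbar,t] encoded as
   finite formal linear combinations (lists) of words; equality is
   coefficientwise (eqnc). *)
From mathcomp Require Import all_boot all_algebra.
From mathcomp.multinomials Require Import mpoly.
Set Implicit Arguments. Unset Strict Implicit. Unset Printing Implicit Defensive.
Import GRing.Theory.
Local Open Scope ring_scope.

Definition R := {mpoly rat[2]}.
Definition hbar : R := 'X_(0 : 'I_2).
Definition tt : R := 'X_(1 : 'I_2).

(* letters: false = x, true = y *)
Definition word := seq bool.
Definition NC := seq (R * word).

Definition coef (p : NC) (w : word) : R :=
  \sum_(a <- p) (if a.2 == w then a.1 else 0).
Definition eqnc (p q : NC) : Prop := forall w, coef p w = coef q w.

Definition addnc (p q : NC) : NC := p ++ q.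
Definition scalenc (c : R) (p : NC) : NC := [seq (c * a.1, a.2) | a <- p].
Definition mulnc (p q : NC) : NC :=
  [seq (a.1 * b.1, a.2 ++ b.2) | a <- p, b <- q].
Definition wd (w : word) : NC := [:: (1, w)].

Definition xpow (n : nat) : word := nseq n false.
Definition zw (j : nat) : word := rcons (nseq j.-1 false) true.
Definition z (j : nat) : NC := wd (zw j).

Definition inH1w (w : word) : bool := (w == [::]) || last false w.
Definition inHyw (w : word) : bool := last false w.
Definition inH1 (p : NC) : Prop := forall w, coef p w != 0 -> inH1w w.
Definition inHy (p : NC) : Prop := forall w, coef p w != 0 -> inHyw w.

(* index sequence (i1,...,in) of a word z_{i1}...z_{in} of H^1 *)
Fixpoint idx_aux (c : nat) (w : word) : seq nat :=
  match w with
  | [::] => [::]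
  | false :: w' => idx_aux c.+1 w'
  | true :: w' => c.+1 :: idx_aux 0 w'
  end.
Definition idx (w : word) : seq nat := idx_aux 0 w.
Definition zword (s : seq nat) : word := flatten [seq zw j | j <- s].

(* z_i o_+ z_j = z_{i+j} + hbar z_{i+j-1}, on index sequences *)
Definition circI (i j : nat) (c : R) (rest : seq nat) : seq (R * seq nat) :=
  [:: (c, (i + j)%N :: rest); (c * hbar, (i + j).-1 :: rest)].

Fixpoint stI (a : seq nat) : seq nat -> seq (R * seq nat) :=
  match a with
  | [::] => fun b => [:: (1, b)]
  | i :: u =>
    fix stIin (b : seq nat) : seq (R * seq nat) :=
      match b with
      | [::] => [:: (1, i :: u)]
      | j :: v =>
          [seq (e.1, i :: e.2) | e <- stI u (j :: v)]
          ++ [seq (e.1, j :: e.2) | e <- stIin v]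
          ++ flatten [seq circI i j e.1 e.2 | e <- stI u v]
      end
  end.

Definition liftI (s : seq (R * seq nat)) : NC := [seq (e.1, zword e.2) | e <- s].

(* *_+ on words of H^1 (zero outside H^1, where it is not defined) *)
Definition stw (u v : word) : NC :=
  if inH1w u && inH1w v then liftI (stI (idx u) (idx v)) else [::].
Definition stp (p q : NC) : NC :=
  flatten [seq scalenc (a.1 * b.1) (stw a.2 b.2) | a <- p, b <- q].

Definition circz (i j : nat) : NC := liftI (circI i j 1 [::]).

Definition gamma_letter (b : bool) : NC :=
  if b then [:: (tt, [:: false]); (1, [:: true]); (hbar * tt, [::])]
  else [:: (1, [:: false])].
Definition gamma_word (w : word) : NC := foldr (fun b p => mulnc (gamma_letter b) p) (wd [::]) w.
Definition gamma (p : NC) : NC :=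
  flatten [seq scalenc a.1 (gamma_word a.2) | a <- p].

Definition circL (k : nat) (e : R * seq nat) : seq (R * seq nat) :=
  match e.2 with
  | [::] => [::]
  | j :: rest => circI k j e.1 rest
  end.
Fixpoint SI (s : seq nat) : seq (R * seq nat) :=
  match s with
  | [::] => [:: (1, [::])]
  | k :: u =>
      [seq (e.1, k :: e.2) | e <- SI u]
      ++ [seq (tt * e.1, e.2) | e <- flatten [seq circL k e | e <- SI u]]
  end.
Definition Sw (w : word) : NC := if inH1w w then liftI (SI (idx w)) else [::].
Definition S (p : NC) : NC := flatten [seq scalenc a.1 (Sw a.2) | a <- p].

(* Elements of H are compared through the sums [wsum p F] of their coefficients
   weighted by arbitrary functions F on words.  All operations involved are linear
   in each argument, so every identity reduces to a pair of words of H^1, that is,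
   of index sequences (i_1, ..., i_n) standing for z_{i_1} ... z_{i_n}.
   Put g_k(w) = z_k w + t z_k o_+ w.  Then gamma(z_k) w = g_k(w) for w in Hy, and
   S(z_k w) = g_k(S w) by definition of S; so (i) and (ii) are both instances of
     g_k(Y) *_+ z_l b = g_k(Y *_+ z_l b) + z_l (g_k(Y) *_+ b) + (1-t) (z_k o_+ z_l) (Y *_+ b),
   and (iii) is the mirror identity with g_l acting on the right factor. *)

From mathcomp Require Import all_boot all_algebra ring zify.
From mathcomp.multinomials Require Import mpoly.
Set Implicit Arguments. Unset Strict Implicit. Unset Printing Implicit Defensive.
Import GRing.Theory.
Local Open Scope ring_scope.

Section WeightedSum.
Variable T : Type.

Definition wsum (p : seq (R * T)) (F : T -> R) : R := \sum_(a <- p) a.1 * F a.2.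

Lemma wsum_nil F : wsum [::] F = 0.
Proof. by rewrite /wsum big_nil. Qed.

Lemma wsum_cons a p F : wsum (a :: p) F = a.1 * F a.2 + wsum p F.
Proof. by rewrite /wsum big_cons. Qed.

Lemma wsum_cat p q F : wsum (p ++ q) F = wsum p F + wsum q F.
Proof. by rewrite /wsum big_cat. Qed.

Lemma wsum_flatten (L : seq (seq (R * T))) F :
  wsum (flatten L) F = \sum_(l <- L) wsum l F.
Proof.
elim: L => [|l L IH]; first by rewrite wsum_nil big_nil.
by rewrite /= wsum_cat IH big_cons.
Qed.

Lemma eq_wsum p F G : F =1 G -> wsum p F = wsum p G.
Proof. by move=> eqFG; apply: eq_bigr => a _; rewrite eqFG. Qed.

Lemma eq_in_wsum (P : pred T) p F G : (forall u, P u -> F u = G u) ->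
  all (fun e => P e.2) p -> wsum p F = wsum p G.
Proof.
move=> eqFG; elim: p => [|a p IH] /=; first by rewrite !wsum_nil.
by case/andP=> Pa Pp; rewrite !wsum_cons eqFG // IH.
Qed.

Lemma wsumD p F G : wsum p (fun u => F u + G u) = wsum p F + wsum p G.
Proof. by rewrite /wsum -big_split; apply: eq_bigr => a _; rewrite mulrDr. Qed.

Lemma wsumMl p c F : wsum p (fun u => c * F u) = c * wsum p F.
Proof. by rewrite /wsum mulr_sumr; apply: eq_bigr => a _; ring. Qed.

Lemma wsum_scale c p F : wsum [seq (c * e.1, e.2) | e <- p] F = c * wsum p F.
Proof. by rewrite /wsum big_map mulr_sumr; apply: eq_bigr => a _ /=; ring. Qed.

End WeightedSum.

Lemma wsum_map_snd (T U : Type) (f : U -> T) (p : seq (R * U)) F :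
  wsum [seq (e.1, f e.2) | e <- p] F = wsum p (fun u => F (f u)).
Proof. by rewrite /wsum big_map. Qed.

Lemma exchange_wsum (T U : Type) (p : seq (R * T)) (q : seq (R * U)) F :
  wsum p (fun u => wsum q (F u)) = wsum q (fun v => wsum p (F^~ v)).
Proof.
rewrite /wsum; under eq_bigr => a _ do rewrite mulr_sumr.
rewrite exchange_big; apply: eq_bigr => b _; rewrite mulr_sumr.
by apply: eq_bigr => a _; ring.
Qed.

Section Support.
Variable T : eqType.

Definition wcoef (p : seq (R * T)) (u : T) : R :=
  \sum_(a <- p) (if a.2 == u then a.1 else 0).

Lemma wsum_support (p : seq (R * T)) F (s : seq T) : uniq s ->
  {subset [seq a.2 | a <- p] <= s} -> wsum p F = \sum_(u <- s) wcoef p u * F u.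
Proof.
move=> uniq_s; elim: p => [|a p IH] sub.
  by rewrite wsum_nil big1 // => u _; rewrite /wcoef big_nil mul0r.
have a2s : a.2 \in s by apply: sub; rewrite inE eqxx.
rewrite wsum_cons IH => [|u pu]; last by apply: sub; rewrite inE pu orbT.
under [RHS]eq_bigr => u _ do rewrite /wcoef big_cons mulrDl.
rewrite big_split /=; congr (_ + _).
rewrite (bigD1_seq a.2) //= eqxx big1 => [|u /negPf nu]; first by rewrite addr0.
by rewrite eq_sym nu mul0r.
Qed.

Lemma eq_wsum_supp (p : seq (R * T)) F G :
  (forall u, wcoef p u != 0 -> F u = G u) -> wsum p F = wsum p G.
Proof.
move=> eqFG; set s := undup [seq a.2 | a <- p].
have sub : {subset [seq a.2 | a <- p] <= s} by move=> u; rewrite mem_undup.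
rewrite !(wsum_support _ (undup_uniq _) sub); apply: eq_bigr => u _.
by case: (eqVneq (wcoef p u) 0) => [->|/eqFG ->]; rewrite ?mul0r.
Qed.

End Support.

Lemma coef_wsum p w : coef p w = wsum p (fun u => (u == w)%:R).
Proof. by apply: eq_bigr => a _; case: eqP; rewrite ?mulr1 ?mulr0. Qed.

Lemma wsum_scalenc c p F : wsum (scalenc c p) F = c * wsum p F.
Proof. exact: wsum_scale. Qed.

Lemma wsum_addnc p q F : wsum (addnc p q) F = wsum p F + wsum q F.
Proof. exact: wsum_cat. Qed.

Lemma wsum_wd u F : wsum (wd u) F = F u.
Proof. by rewrite wsum_cons wsum_nil addr0 mul1r. Qed.

Lemma wsum_mulnc p q F :
  wsum (mulnc p q) F = wsum p (fun u => wsum q (fun v => F (u ++ v))).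
Proof.
elim: p => [|a p IH]; first by rewrite !wsum_nil.
rewrite /mulnc allpairs_cons wsum_cat -/(mulnc p q) IH wsum_cons; congr (_ + _).
by rewrite /wsum big_map mulr_sumr; apply: eq_bigr => b _ /=; ring.
Qed.

Lemma wsum_stp p q F :
  wsum (stp p q) F = wsum p (fun u => wsum q (fun v => wsum (stw u v) F)).
Proof.
rewrite /stp wsum_flatten big_allpairs_dep /wsum; apply: eq_bigr => a _.
rewrite mulr_sumr; apply: eq_bigr => b _ /=.
by rewrite -/(wsum _ _) wsum_scale /wsum; ring.
Qed.

Lemma wsum_gamma p F : wsum (gamma p) F = wsum p (fun u => wsum (gamma_word u) F).
Proof.
rewrite /gamma wsum_flatten big_map.
by apply: eq_bigr => a _; rewrite wsum_scale.
Qed.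

Lemma wsum_S p F : wsum (S p) F = wsum p (fun u => wsum (Sw u) F).
Proof. by rewrite /S wsum_flatten big_map; apply: eq_bigr => a _; rewrite wsum_scale. Qed.

Definition nc_linear (f : NC -> NC) :=
  forall p F, wsum (f p) F = wsum p (fun u => wsum (f (wd u)) F).

Lemma linear_id : nc_linear id.
Proof. by move=> p F; apply: eq_wsum => u; rewrite wsum_wd. Qed.

Lemma linear_addnc f g : nc_linear f -> nc_linear g ->
  nc_linear (fun p => addnc (f p) (g p)).
Proof.
move=> lf lg p F; rewrite wsum_addnc lf lg -wsumD.
by apply: eq_wsum => u; rewrite wsum_addnc.
Qed.

Lemma linear_scalenc c f : nc_linear f -> nc_linear (fun p => scalenc c (f p)).
Proof.
move=> lf p F; rewrite wsum_scalenc lf -wsumMl.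
by apply: eq_wsum => u; rewrite wsum_scalenc.
Qed.

Lemma linear_mulncl q f : nc_linear f -> nc_linear (fun p => mulnc q (f p)).
Proof.
move=> lf p F; rewrite wsum_mulnc.
under eq_wsum => u do rewrite lf.
rewrite exchange_wsum; apply: eq_wsum => u.
by rewrite wsum_mulnc.
Qed.

Lemma linear_stpl q f : nc_linear f -> nc_linear (fun p => stp (f p) q).
Proof.
move=> lf p F; rewrite wsum_stp lf; apply: eq_wsum => u.
by rewrite wsum_stp.
Qed.

Lemma linear_stpr q f : nc_linear f -> nc_linear (fun p => stp q (f p)).
Proof.
move=> lf p F; rewrite wsum_stp.
under eq_wsum => u do rewrite lf.
rewrite exchange_wsum; apply: eq_wsum => u.
by rewrite wsum_stp.
Qed.

Lemma linear_S f : nc_linear f -> nc_linear (fun p => S (f p)).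
Proof.
move=> lf p F; rewrite wsum_S lf; apply: eq_wsum => u.
by rewrite wsum_S.
Qed.

(* [match] rather than [lazymatch]: both [stp] patterns may match a goal, and
   only one of them leads to a provable subgoal. *)
Ltac solve_nc_linear :=
  match goal with
  | |- nc_linear (fun p => p) => exact: linear_id
  | |- nc_linear (fun p => addnc (@?f p) (@?g p)) =>
      apply: (@linear_addnc f g); solve_nc_linear
  | |- nc_linear (fun p => scalenc ?c (@?f p)) =>
      apply: (@linear_scalenc c f); solve_nc_linear
  | |- nc_linear (fun p => mulnc ?q (@?f p)) =>
      apply: (@linear_mulncl q f); solve_nc_linear
  | |- nc_linear (fun p => stp (@?f p) ?q) =>
      apply: (@linear_stpl q f); solve_nc_linear
  | |- nc_linear (fun p => stp ?q (@?f p)) =>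
      apply: (@linear_stpr q f); solve_nc_linear
  | |- nc_linear (fun p => S (@?f p)) =>
      apply: (@linear_S f); solve_nc_linear
  end.

Lemma nc_linear_congr f p p' : (forall G, wsum p G = wsum p' G) ->
  nc_linear f -> forall F, wsum (f p) F = wsum (f p') F.
Proof. by move=> eqp lf F; rewrite lf eqp -lf. Qed.

Lemma eqnc_bilinear (E E' : NC -> NC -> NC) (P Q : pred word) :
  (forall w, nc_linear (E^~ w)) -> (forall v, nc_linear (E v)) ->
  (forall w, nc_linear (E'^~ w)) -> (forall v, nc_linear (E' v)) ->
  (forall a b, P a -> Q b -> forall F,
     wsum (E (wd a) (wd b)) F = wsum (E' (wd a) (wd b)) F) ->
  forall v w, (forall a, coef v a != 0 -> P a) -> (forall b, coef w b != 0 -> Q b) ->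
  eqnc (E v w) (E' v w).
Proof.
move=> linE1 linE2 linE'1 linE'2 eqE v w Pv Qw u; rewrite !coef_wsum linE1 linE'1.
apply: eq_wsum_supp => a va; rewrite linE2 linE'2.
by apply: eq_wsum_supp => b wb; apply: eqE; [apply: Pv va | apply: Qw wb].
Qed.

(* Transposes, acting on functionals over index sequences, of left
   multiplication by z_i, by z_i o_+ z_j, and by g_k. *)
Definition lz (i : nat) (F : seq nat -> R) : seq nat -> R := fun s => F (i :: s).

Definition lcirc (i j : nat) (F : seq nat -> R) : seq nat -> R :=
  fun s => F ((i + j)%N :: s) + hbar * F ((i + j).-1 :: s).

Definition lstep (k : nat) (F : seq nat -> R) : seq nat -> R :=
  fun s => lz k F s + tt * (if s is q :: r then lcirc k q F r else 0).

Lemma lstep_nil k F : lstep k F [::] = F [:: k].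
Proof. by rewrite /lstep mulr0 addr0. Qed.

Lemma lstep_cons k F q r : lstep k F (q :: r) =
  F (k :: q :: r) + tt * (F ((k + q)%N :: r) + hbar * F ((k + q).-1 :: r)).
Proof. by []. Qed.

Lemma wsum_lcirc X i j F :
  wsum X (lcirc i j F) = wsum X (lz (i + j) F) + hbar * wsum X (lz (i + j).-1 F).
Proof. by rewrite -wsumMl -wsumD. Qed.

Lemma wsum_lz_lstep X p k F :
  wsum X (lz p (lstep k F)) = wsum X (lz p (lz k F)) + tt * wsum X (lcirc k p F).
Proof. by rewrite -wsumMl -wsumD. Qed.

Lemma wsum_stI_nil v F : wsum (stI [::] v) F = F v.
Proof. by rewrite wsum_cons wsum_nil mul1r addr0. Qed.

Lemma wsum_stI_cons i u j v F : wsum (stI (i :: u) (j :: v)) F =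
  wsum (stI u (j :: v)) (lz i F) + wsum (stI (i :: u) v) (lz j F)
  + wsum (stI u v) (lcirc i j F).
Proof.
rewrite [stI _ _]/= !wsum_cat !(wsum_map_snd (cons _)) wsum_flatten big_map addrA.
congr (_ + _); apply: eq_bigr => e _.
by rewrite /circI !wsum_cons wsum_nil /lcirc /=; ring.
Qed.

Lemma lstep_stIl k l F Y b : (0 < k)%N -> (0 < l)%N ->
  lstep k (fun y => wsum (stI y (l :: b)) F) Y =
  wsum (stI Y (l :: b)) (lstep k F) + lstep k (fun y => wsum (stI y b) (lz l F)) Y
  + (1 - tt) * wsum (stI Y b) (lcirc k l F).
Proof.
case: k => // k _; case: l => // l _; case: Y => [|p V].
  rewrite !lstep_nil wsum_stI_cons !wsum_stI_nil /lstep /lcirc /lz; ring.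
rewrite !lstep_cons !wsum_stI_cons !(wsum_lcirc, wsum_lz_lstep).
rewrite !(addSn, addnS, succnK, addnA).
ring.
Qed.

Lemma lstep_stIr a l q F V W : (0 < a)%N -> (0 < l)%N -> (0 < q)%N ->
  lstep l (fun y => wsum (stI (a :: V) y) F) (q :: W) =
  lstep l (fun y => wsum (stI V y) (lz a F)) (q :: W)
  + wsum (stI (a :: V) (q :: W)) (lstep l F)
  + (1 - tt) * wsum (stI V (q :: W)) (lcirc a l F).
Proof.
case: a => // a _; case: l => // l _; case: q => // q _.
rewrite !lstep_cons !wsum_stI_cons !(wsum_lcirc, wsum_lz_lstep).
rewrite !(addSn, addnS, succnK, addnA) (addnC l a).
ring.
Qed.

Lemma wsum_SI_cons k u F : wsum (SI (k :: u)) F = wsum (SI u) (lstep k F).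
Proof.
rewrite /= wsum_cat wsum_map_snd wsum_scale wsum_flatten big_map /wsum mulr_sumr.
rewrite -big_split; apply: eq_bigr => -[c [|q r]] _ /=.
  by rewrite big_nil /lstep /lz; ring.
by rewrite /circI !big_cons big_nil /lstep /lz /lcirc /=; ring.
Qed.

(* [zw 0 = zw 1], so index sequences code words faithfully only when positive. *)
Definition pos_seq (s : seq nat) : bool := all (leq 1) s.

Lemma pos_circI i j c s : (0 < i)%N -> (0 < j)%N -> pos_seq s ->
  all (fun e => pos_seq e.2) (circI i j c s).
Proof.
move=> i_gt0 j_gt0 ps; rewrite /= -!/(pos_seq _) ps !andbT.
by apply/andP; split; lia.
Qed.

Lemma pos_stI u v : pos_seq u -> pos_seq v -> all (fun e => pos_seq e.2) (stI u v).
Proof.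
elim: u v => [|i u IHu] v; first by rewrite /= andbT => _.
elim: v => [|j v IHv]; first by rewrite /= andbT.
move=> /[dup] piu /andP [pi pu] /[dup] pjv /andP [pj pv].
rewrite [stI _ _]/= !all_cat !all_map; apply/and3P; split.
- by apply: sub_all (IHu _ pu pjv) => e /= pe; rewrite /pos_seq /= pi.
- by apply: sub_all (IHv piu pv) => e /= pe; rewrite /pos_seq /= pj.
- apply/allP => e /flattenP [x /mapP [d /(allP (IHu _ pu pv)) pd ->]].
  by move: e; apply/allP/pos_circI.
Qed.

Lemma stI_nonnil u v : v != [::] -> all (fun e => e.2 != [::]) (stI u v).
Proof.
case: u => [|i u]; first by move=> /= ->.
case: v => // j v _; rewrite [stI _ _]/= !all_cat !all_map.
apply/and3P; split; try exact/allP.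
by apply/allP => e /flattenP [x /mapP [d _ ->]]; rewrite !inE => /orP [] /eqP ->.
Qed.

Lemma pos_SI u : pos_seq u -> all (fun e => pos_seq e.2) (SI u).
Proof.
elim: u => [|k u IH] //= /andP [pk pu]; rewrite all_cat !all_map; apply/andP; split.
  by apply: sub_all (IH pu) => e /= pe; rewrite /pos_seq /= pk.
apply/allP => e /flattenP [x /mapP [[c [|j r]] /(allP (IH pu)) /= pjr ->]] //.
by case/andP: pjr => pj pr; move: e; apply/allP/pos_circI.
Qed.

Lemma zw_cat j w : zw j ++ w = nseq j.-1 false ++ true :: w.
Proof. by rewrite /zw cat_rcons. Qed.

Lemma zword_cons j s : zword (j :: s) = zw j ++ zword s.
Proof. by []. Qed.

Lemma inHyw_inH1w w : inHyw w -> inH1w w.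
Proof. by rewrite /inH1w /inHyw => ->; rewrite orbT. Qed.

Lemma inHyw_zw_cat j w : inH1w w -> inHyw (zw j ++ w).
Proof.
rewrite /inHyw last_cat /zw last_rcons.
by case: w => [|b w] //= /orP [].
Qed.

Lemma inH1w_zword s : inH1w (zword s).
Proof. by elim: s => [|j s IH] //; apply/inHyw_inH1w/inHyw_zw_cat. Qed.

Lemma idx_aux_nseq c n w : idx_aux c (nseq n false ++ w) = idx_aux (c + n) w.
Proof. by elim: n c => [|n IH] c /=; rewrite ?addn0 // IH addnS. Qed.

Lemma idx_zw_cat j w : (0 < j)%N -> idx (zw j ++ w) = j :: idx w.
Proof. by case: j => // j _; rewrite zw_cat /idx idx_aux_nseq. Qed.

Lemma idx_zword s : pos_seq s -> idx (zword s) = s.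
Proof. by elim: s => [|j s IH] //= /andP [pj ps]; rewrite idx_zw_cat // IH. Qed.

Lemma pos_idx_aux c w : pos_seq (idx_aux c w).
Proof. by elim: w c => [|[] w IH] c //=. Qed.

Lemma idx_aux_nonnil c w : last false w -> idx_aux c w != [::].
Proof. by elim: w c => [|[] w IH] c //= /IH. Qed.

Lemma zword_idx_aux c w : last false w -> zword (idx_aux c w) = nseq c false ++ w.
Proof.
elim: w c => [|[] w IH] c //= lw.
  rewrite zword_cons zw_cat /=.
  by case: w IH lw => [|b w] IH lw //; rewrite (IH 0).
by rewrite IH // -addn1 nseqD -catA.
Qed.

Lemma zword_idx w : inH1w w -> zword (idx w) = w.
Proof. by case/orP => [/eqP -> //|]; apply: zword_idx_aux. Qed.

Lemma wsum_mulnc_wd p b F : wsum (mulnc p (wd b)) F = wsum p (fun u => F (u ++ b)).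
Proof. by rewrite wsum_mulnc; apply: eq_wsum => u; rewrite wsum_wd. Qed.

Lemma wsum_z_mulnc l p F : wsum (mulnc (z l) p) F = wsum p (fun v => F (zw l ++ v)).
Proof. by rewrite wsum_mulnc wsum_wd. Qed.

Lemma wsum_z_wd l b F : wsum (mulnc (z l) (wd b)) F = F (zw l ++ b).
Proof. by rewrite wsum_mulnc_wd wsum_wd. Qed.

Lemma wsum_z_wd_cat l b G : wsum (mulnc (z l) (wd b)) G = wsum (wd (zw l ++ b)) G.
Proof. by rewrite wsum_z_wd wsum_wd. Qed.

Lemma wsum_xpow_z_wd_cat k p w : (0 < p)%N -> forall F,
  wsum (mulnc (wd (xpow k)) (mulnc (z p) (wd w))) F = wsum (wd (zw (k + p) ++ w)) F.
Proof.
case: p => // p _ F; rewrite wsum_mulnc wsum_wd wsum_z_wd wsum_wd.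
by rewrite /xpow !zw_cat addnS /= nseqD -catA.
Qed.

Lemma wsum_circz k l F : wsum (circz k l) F = F (zw (k + l)) + hbar * F (zw (k + l).-1).
Proof. by rewrite /circz wsum_map_snd !wsum_cons wsum_nil /zword /= !cats0; ring. Qed.

Lemma wsum_stw u v F : inH1w u -> inH1w v ->
  wsum (stw u v) F = wsum (stI (idx u) (idx v)) (F \o zword).
Proof. by rewrite /stw => -> ->; rewrite wsum_map_snd. Qed.

Lemma wsum_Sw u F : inH1w u -> wsum (Sw u) F = wsum (SI (idx u)) (F \o zword).
Proof. by rewrite /Sw => ->; rewrite wsum_map_snd. Qed.

Lemma wsum_S_wd u F : inH1w u -> wsum (S (wd u)) F = wsum (SI (idx u)) (F \o zword).
Proof. by move=> H1u; rewrite wsum_S wsum_wd wsum_Sw. Qed.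

Lemma wsum_S_z k u F : (0 < k)%N -> inH1w u ->
  wsum (S (mulnc (z k) (wd u))) F = wsum (SI (idx u)) (lstep k (F \o zword)).
Proof.
move=> k_gt0 H1u; rewrite wsum_S wsum_z_wd wsum_Sw ?inHyw_inH1w ?inHyw_zw_cat //.
by rewrite idx_zw_cat // wsum_SI_cons.
Qed.

Lemma wsum_linear_S_wd f a F : nc_linear f -> inH1w a ->
  wsum (f (S (wd a))) F = wsum (SI (idx a)) (fun Y => wsum (f (wd (zword Y))) F).
Proof. by move=> lf H1a; rewrite lf wsum_S_wd. Qed.

Lemma wsum_gamma_word_nseq n w F :
  wsum (gamma_word (nseq n false ++ w)) F =
  wsum (gamma_word w) (fun v => F (nseq n false ++ v)).
Proof.
elim: n F => [|n IH] F //=.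
by rewrite wsum_mulnc /gamma_letter wsum_cons wsum_nil addr0 mul1r IH.
Qed.

Lemma wsum_gamma_z k F : (0 < k)%N -> wsum (gamma (z k)) F =
  tt * F (xpow k) + F (zw k) + hbar * tt * F (xpow k.-1).
Proof.
case: k => // k _; rewrite wsum_gamma wsum_wd /zw -cats1 wsum_gamma_word_nseq.
rewrite /= wsum_mulnc /gamma_letter !wsum_cons !wsum_nil /= cats0.
by rewrite -[[:: false]]/(nseq 1 false) -nseqD addn1; ring.
Qed.

Lemma wsum_gamma_z_zword k q r F : (0 < k)%N -> (0 < q)%N ->
  wsum (gamma (z k)) (fun u => F (u ++ zword (q :: r))) = lstep k (F \o zword) (q :: r).
Proof.
case: k => // k _; case: q => // q _.
rewrite wsum_gamma_z // lstep_cons /= !zword_cons !zw_cat /xpow /=.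
by rewrite addnS /= nseqD -catA; ring.
Qed.

Lemma wsum_gamma_z_wd k a F : (0 < k)%N -> inHyw a ->
  wsum (mulnc (gamma (z k)) (wd a)) F = lstep k (F \o zword) (idx a).
Proof.
move=> k_gt0 Hya; have := zword_idx (inHyw_inH1w Hya).
have := pos_idx_aux 0 a; have := idx_aux_nonnil 0 Hya; rewrite -/(idx a).
rewrite wsum_mulnc_wd.
by case: (idx a) => [|q r] //= _ /andP [q_gt0 _] <-; apply: wsum_gamma_z_zword.
Qed.

Lemma eq_in_lstep k F G Y : (0 < k)%N -> pos_seq Y ->
  (forall s, pos_seq s -> F s = G s) -> lstep k F Y = lstep k G Y.
Proof.
move=> k_gt0; case: Y => [|q r] pY eqFG; first by rewrite !lstep_nil eqFG //= k_gt0.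
have [q_gt0 pr] : (0 < q)%N /\ pos_seq r by apply/andP.
by rewrite !lstep_cons !eqFG //= ?k_gt0 ?q_gt0 ?pr ?andbT //; lia.
Qed.

Lemma pos_nonnil_stI u v : pos_seq u -> pos_seq v -> v != [::] ->
  all (fun e => pos_seq e.2 && (e.2 != [::])) (stI u v).
Proof.
move=> pu pv nv; apply/allP => e eL.
by rewrite (allP (pos_stI pu pv) e eL) (allP (stI_nonnil u nv) e eL).
Qed.

Lemma wsum_gamma_z_stI k L F : (0 < k)%N ->
  all (fun e => pos_seq e.2 && (e.2 != [::])) L ->
  wsum L (fun s => wsum (gamma (z k)) (fun u => F (u ++ zword s))) =
  wsum L (lstep k (F \o zword)).
Proof.
move=> k_gt0; apply: (eq_in_wsum (P := fun s => pos_seq s && (s != [::]))).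
move=> -[|q r] // /andP [/andP [q_gt0 _] _].
exact: wsum_gamma_z_zword.
Qed.

Lemma wsum_stp_gamma_z_l k a b F : (0 < k)%N -> inHyw a -> inH1w b ->
  wsum (stp (mulnc (gamma (z k)) (wd a)) (wd b)) F =
  lstep k (fun y => wsum (stI y (idx b)) (F \o zword)) (idx a).
Proof.
move=> k_gt0 Hya H1b; rewrite wsum_stp.
under eq_wsum => u do rewrite wsum_wd.
rewrite wsum_gamma_z_wd //; apply: eq_in_lstep (pos_idx_aux _ _) _ => // s ps.
by rewrite /= wsum_stw ?inH1w_zword // idx_zword.
Qed.

Lemma wsum_stp_gamma_z_r l d c F : (0 < l)%N -> inH1w d -> inHyw c ->
  wsum (stp (wd d) (mulnc (gamma (z l)) (wd c))) F =
  lstep l (fun y => wsum (stI (idx d) y) (F \o zword)) (idx c).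
Proof.
move=> l_gt0 H1d Hyc; rewrite wsum_stp wsum_wd wsum_gamma_z_wd //.
apply: eq_in_lstep (pos_idx_aux _ _) _ => // s ps.
by rewrite /= wsum_stw ?inH1w_zword // idx_zword.
Qed.

Lemma wsum_stp_S_z_l k a c F : (0 < k)%N -> inH1w a -> inH1w c ->
  wsum (stp (S (mulnc (z k) (wd a))) (wd c)) F =
  wsum (SI (idx a)) (lstep k (fun y => wsum (stI y (idx c)) (F \o zword))).
Proof.
move=> k_gt0 H1a H1c; rewrite wsum_stp.
under eq_wsum => u do rewrite wsum_wd.
rewrite wsum_S_z //; apply: (eq_in_wsum (P := pos_seq)) (pos_SI (pos_idx_aux _ _)).
move=> Y pY; apply: eq_in_lstep => // s ps.
by rewrite /= wsum_stw ?inH1w_zword // idx_zword.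
Qed.

Lemma wsum_gamma_z_stp k a c F : (0 < k)%N -> inH1w a -> inHyw c ->
  wsum (mulnc (gamma (z k)) (stp (wd a) (wd c))) F =
  wsum (stI (idx a) (idx c)) (lstep k (F \o zword)).
Proof.
move=> k_gt0 H1a Hyc; rewrite wsum_mulnc exchange_wsum wsum_stp !wsum_wd.
rewrite wsum_stw ?(inHyw_inH1w Hyc) //; apply: wsum_gamma_z_stI => //.
by apply: pos_nonnil_stI; rewrite ?pos_idx_aux ?idx_aux_nonnil.
Qed.

Lemma wsum_gamma_z_S_stp k a c F : (0 < k)%N -> inH1w a -> inHyw c ->
  wsum (mulnc (gamma (z k)) (stp (S (wd a)) (wd c))) F =
  wsum (SI (idx a)) (fun Y => wsum (stI Y (idx c)) (lstep k (F \o zword))).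
Proof.
move=> k_gt0 H1a Hyc.
rewrite (wsum_linear_S_wd (f := fun p => mulnc _ (stp p _))) //; last by solve_nc_linear.
apply: (eq_in_wsum (P := pos_seq)) (pos_SI (pos_idx_aux _ _)) => Y pY.
by rewrite wsum_gamma_z_stp ?inH1w_zword // idx_zword.
Qed.

Lemma wsum_circz_stp i j a b F : inH1w a -> inH1w b ->
  wsum (mulnc (circz i j) (stp (wd a) (wd b))) F =
  wsum (stI (idx a) (idx b)) (lcirc i j (F \o zword)).
Proof.
move=> H1a H1b; rewrite wsum_mulnc wsum_circz !wsum_stp !wsum_wd !wsum_stw //.
by rewrite wsum_lcirc.
Qed.

Lemma wsum_circz_S_stp i j a b F : inH1w a -> inH1w b ->
  wsum (mulnc (circz i j) (stp (S (wd a)) (wd b))) F =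
  wsum (SI (idx a)) (fun Y => wsum (stI Y (idx b)) (lcirc i j (F \o zword))).
Proof.
move=> H1a H1b.
rewrite (wsum_linear_S_wd (f := fun p => mulnc _ (stp p _))) //; last by solve_nc_linear.
apply: (eq_in_wsum (P := pos_seq)) (pos_SI (pos_idx_aux _ _)) => Y pY.
by rewrite wsum_circz_stp ?inH1w_zword // idx_zword.
Qed.

Lemma stp_gamma_z_wd k l a b F : (0 < k)%N -> (0 < l)%N -> inHyw a -> inH1w b ->
  wsum (stp (mulnc (gamma (z k)) (wd a)) (mulnc (z l) (wd b))) F =
  wsum (addnc (mulnc (gamma (z k)) (stp (wd a) (mulnc (z l) (wd b))))
     (addnc (mulnc (z l) (stp (mulnc (gamma (z k)) (wd a)) (wd b)))
            (scalenc (1 - tt) (mulnc (circz k l) (stp (wd a) (wd b)))))) F.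
Proof.
move=> k_gt0 l_gt0 Hya H1b; have H1a := inHyw_inH1w Hya.
have Hylb := inHyw_zw_cat l H1b; have H1lb := inHyw_inH1w Hylb.
have idx_lb : idx (zw l ++ b) = l :: idx b by rewrite idx_zw_cat.
have lhsE : wsum (stp (mulnc (gamma (z k)) (wd a)) (mulnc (z l) (wd b))) F =
    lstep k (fun y => wsum (stI y (l :: idx b)) (F \o zword)) (idx a).
  rewrite -idx_lb -wsum_stp_gamma_z_l //.
  by apply: (nc_linear_congr (f := fun q => stp _ q) (wsum_z_wd_cat l b)); solve_nc_linear.
have rhs1E : wsum (mulnc (gamma (z k)) (stp (wd a) (mulnc (z l) (wd b)))) F =
    wsum (stI (idx a) (l :: idx b)) (lstep k (F \o zword)).
  rewrite -idx_lb -wsum_gamma_z_stp //.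
  apply: (nc_linear_congr (f := fun q => mulnc _ (stp _ q)) (wsum_z_wd_cat l b)).
  by solve_nc_linear.
have rhs2E : wsum (mulnc (z l) (stp (mulnc (gamma (z k)) (wd a)) (wd b))) F =
    lstep k (fun y => wsum (stI y (idx b)) (lz l (F \o zword))) (idx a).
  by rewrite wsum_z_mulnc wsum_stp_gamma_z_l.
rewrite 2!wsum_addnc wsum_scalenc lhsE rhs1E rhs2E wsum_circz_stp // lstep_stIl //.
by ring.
Qed.

Lemma stp_S_z_wd k l a b F : (0 < k)%N -> (0 < l)%N -> inH1w a -> inH1w b ->
  wsum (stp (S (mulnc (z k) (wd a))) (mulnc (z l) (wd b))) F =
  wsum (addnc (mulnc (gamma (z k)) (stp (S (wd a)) (mulnc (z l) (wd b))))
     (addnc (mulnc (z l) (stp (S (mulnc (z k) (wd a))) (wd b)))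
            (scalenc (1 - tt) (mulnc (circz k l) (stp (S (wd a)) (wd b)))))) F.
Proof.
move=> k_gt0 l_gt0 H1a H1b.
have Hylb := inHyw_zw_cat l H1b; have H1lb := inHyw_inH1w Hylb.
have idx_lb : idx (zw l ++ b) = l :: idx b by rewrite idx_zw_cat.
have lhsE : wsum (stp (S (mulnc (z k) (wd a))) (mulnc (z l) (wd b))) F =
    wsum (SI (idx a)) (lstep k (fun y => wsum (stI y (l :: idx b)) (F \o zword))).
  rewrite -idx_lb -wsum_stp_S_z_l //.
  by apply: (nc_linear_congr (f := fun q => stp _ q) (wsum_z_wd_cat l b)); solve_nc_linear.
have rhs1E : wsum (mulnc (gamma (z k)) (stp (S (wd a)) (mulnc (z l) (wd b)))) F =
    wsum (SI (idx a)) (fun Y => wsum (stI Y (l :: idx b)) (lstep k (F \o zword))).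
  rewrite -idx_lb -wsum_gamma_z_S_stp //.
  apply: (nc_linear_congr (f := fun q => mulnc _ (stp _ q)) (wsum_z_wd_cat l b)).
  by solve_nc_linear.
have rhs2E : wsum (mulnc (z l) (stp (S (mulnc (z k) (wd a))) (wd b))) F =
    wsum (SI (idx a)) (lstep k (fun y => wsum (stI y (idx b)) (lz l (F \o zword)))).
  by rewrite wsum_z_mulnc wsum_stp_S_z_l.
rewrite 2!wsum_addnc wsum_scalenc lhsE rhs1E rhs2E wsum_circz_S_stp //.
rewrite -wsumMl -!wsumD; apply: eq_wsum => Y.
by rewrite lstep_stIl //; ring.
Qed.

Lemma stp_xpow_gamma_z_wd k l p V c F : (0 < l)%N -> (0 < p)%N -> inH1w V -> inHyw c ->
  wsum (stp (mulnc (wd (xpow k)) (mulnc (z p) (wd V))) (mulnc (gamma (z l)) (wd c))) F =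
  wsum (addnc (mulnc (z (k + p)) (stp (wd V) (mulnc (gamma (z l)) (wd c))))
     (addnc (mulnc (gamma (z l)) (stp (mulnc (wd (xpow k)) (mulnc (z p) (wd V))) (wd c)))
            (scalenc (1 - tt) (mulnc (circz (k + p) l) (stp (wd V) (wd c)))))) F.
Proof.
move=> l_gt0 p_gt0 H1V Hyc; have H1c := inHyw_inH1w Hyc.
have kp_gt0 : (0 < k + p)%N by rewrite addn_gt0 p_gt0 orbT.
have H1kpV := inHyw_inH1w (inHyw_zw_cat (k + p) H1V).
have idx_kpV : idx (zw (k + p) ++ V) = (k + p)%N :: idx V by rewrite idx_zw_cat.
have xpowE := wsum_xpow_z_wd_cat k V p_gt0.
have lhsE : wsum (stp (mulnc (wd (xpow k)) (mulnc (z p) (wd V)))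
                     (mulnc (gamma (z l)) (wd c))) F =
    lstep l (fun y => wsum (stI ((k + p)%N :: idx V) y) (F \o zword)) (idx c).
  rewrite -idx_kpV -wsum_stp_gamma_z_r //.
  by apply: (nc_linear_congr (f := fun q => stp q _) xpowE); solve_nc_linear.
have rhs1E : wsum (mulnc (z (k + p)) (stp (wd V) (mulnc (gamma (z l)) (wd c)))) F =
    lstep l (fun y => wsum (stI (idx V) y) (lz (k + p) (F \o zword))) (idx c).
  by rewrite wsum_z_mulnc wsum_stp_gamma_z_r.
have rhs2E : wsum (mulnc (gamma (z l))
                      (stp (mulnc (wd (xpow k)) (mulnc (z p) (wd V))) (wd c))) F =
    wsum (stI ((k + p)%N :: idx V) (idx c)) (lstep l (F \o zword)).
  rewrite -idx_kpV -wsum_gamma_z_stp //.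
  by apply: (nc_linear_congr (f := fun q => mulnc _ (stp q _)) xpowE); solve_nc_linear.
rewrite 2!wsum_addnc wsum_scalenc lhsE rhs1E rhs2E wsum_circz_stp //.
have := pos_idx_aux 0 c; have := idx_aux_nonnil 0 Hyc; rewrite -/(idx c).
case: (idx c) => [|q W] //= _ /andP [q_gt0 _].
by rewrite lstep_stIr //; ring.
Qed.

Lemma stp_gamma_z k l v w : (0 < k)%N -> (0 < l)%N -> inHy v -> inH1 w ->
  eqnc (stp (mulnc (gamma (z k)) v) (mulnc (z l) w))
       (addnc (mulnc (gamma (z k)) (stp v (mulnc (z l) w)))
       (addnc (mulnc (z l) (stp (mulnc (gamma (z k)) v) w))
              (scalenc (1 - tt) (mulnc (circz k l) (stp v w))))).
Proof.
move=> k_gt0 l_gt0; move: v w; apply: eqnc_bilinear; try by move=> ?; solve_nc_linear.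
by move=> a b Hya H1b F; apply: stp_gamma_z_wd.
Qed.

Lemma stp_S_z k l v w : (0 < k)%N -> (0 < l)%N -> inH1 v -> inH1 w ->
  eqnc (stp (S (mulnc (z k) v)) (mulnc (z l) w))
       (addnc (mulnc (gamma (z k)) (stp (S v) (mulnc (z l) w)))
       (addnc (mulnc (z l) (stp (S (mulnc (z k) v)) w))
              (scalenc (1 - tt) (mulnc (circz k l) (stp (S v) w))))).
Proof.
move=> k_gt0 l_gt0; move: v w; apply: eqnc_bilinear; try by move=> ?; solve_nc_linear.
by move=> a b H1a H1b F; apply: stp_S_z_wd.
Qed.

Lemma stp_xpow_gamma_z k l p V w : (0 < l)%N -> (0 < p)%N -> inH1 V -> inHy w ->
  eqnc (stp (mulnc (wd (xpow k)) (mulnc (z p) V)) (mulnc (gamma (z l)) w))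
       (addnc (mulnc (z (k + p)) (stp V (mulnc (gamma (z l)) w)))
       (addnc (mulnc (gamma (z l)) (stp (mulnc (wd (xpow k)) (mulnc (z p) V)) w))
              (scalenc (1 - tt) (mulnc (circz (k + p) l) (stp V w))))).
Proof.
move=> l_gt0 p_gt0; move: V w; apply: eqnc_bilinear; try by move=> ?; solve_nc_linear.
by move=> a c H1a Hyc F; apply: stp_xpow_gamma_z_wd.
Qed.

Theorem lemma2p2 :
  (* (i) *)
  (forall (k l : nat) (v w : NC), (1 <= k)%N -> (1 <= l)%N -> inHy v -> inH1 w ->
     eqnc (stp (mulnc (gamma (z k)) v) (mulnc (z l) w))
       (addnc (mulnc (gamma (z k)) (stp v (mulnc (z l) w)))
       (addnc (mulnc (z l) (stp (mulnc (gamma (z k)) v) w))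
              (scalenc (1 - tt) (mulnc (circz k l) (stp v w)))))) /\
  (* (ii) *)
  (forall (k l : nat) (v w : NC), (1 <= k)%N -> (1 <= l)%N -> inH1 v -> inH1 w ->
     eqnc (stp (S (mulnc (z k) v)) (mulnc (z l) w))
       (addnc (mulnc (gamma (z k)) (stp (S v) (mulnc (z l) w)))
       (addnc (mulnc (z l) (stp (S (mulnc (z k) v)) w))
              (scalenc (1 - tt) (mulnc (circz k l) (stp (S v) w)))))) /\
  (* (iii) *)
  (forall (k l p : nat) (V w : NC), (1 <= l)%N -> (1 <= p)%N -> inH1 V -> inHy w ->
     let v := mulnc (z p) V in
     eqnc (stp (mulnc (wd (xpow k)) v) (mulnc (gamma (z l)) w))
       (addnc (mulnc (z (k + p)) (stp V (mulnc (gamma (z l)) w)))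
       (addnc (mulnc (gamma (z l)) (stp (mulnc (wd (xpow k)) v) w))
              (scalenc (1 - tt) (mulnc (circz (k + p) l) (stp V w)))))).
Proof.
split; [exact: stp_gamma_z | split; [exact: stp_S_z | exact: stp_xpow_gamma_z]].
Qed.
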